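(* Let $T \geq 1$, let $\mathbf{u}$ be an input, and let $h_1, \dots, h_T$ be deterministic functions, where $h_t$ takes as arguments $\mathbf{u}$ and states $\mathbf{s}_1, \dots, \mathbf{s}_{t-1}$ and returns a state (states lie in normed vector spaces). Let $\mathbf{s}^*_1, \dots, \mathbf{s}^*_T$ be the values produced by feedforward computation, i.e. $\mathbf{s}^*_t = h_t(\mathbf{u}, \mathbf{s}^*_{1:t-1})$ for $t = 1, \dots, T$ (equivalently, the unique solution of the triangular system $h_t(\mathbf{u}, \mathbf{s}_{1:t-1}) - \mathbf{s}_t = 0$, $t=1,\dots,T$). Consider the nonlinear Jacobi iteration with tolerance $\epsilon \ge 0$: initialize arbitrary $\mathbf{s}^0_1, \dots, \mathbf{s}^0_T$ and set $k \gets 0$; repeat { $k \gets k+1$; for all $t = 1, \dots, T$ (in parallel) set $\mathbf{s}^k_t \gets h_t(\mathbf{u}, \mathbf{s}^{k-1}_{1:t-1})$ } until $k = T$ or $\|\mathbf{s}^k_{1:T} - \mathbf{s}^{k-1}_{1:T}\| < \epsilon$; return $\mathbf{s}^k_1, \dots, \mathbf{s}^k_T$. If $\epsilon = 0$, then for any initialization $\mathbf{s}^0_{1:T}$ this algorithm converges and returns $\mathbf{s}^*_1, \dots, \mathbf{s}^*_T$ (the same result as feedforward computation) in at most $T$ parallel iterations.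
   Context: Notation: $\mathbf{s}_{a:b}$ denotes $\mathbf{s}_a, \mathbf{s}_{a+1}, \dots, \mathbf{s}_b$ (empty if $b < a$), so $h_1$ depends only on $\mathbf{u}$. A ''parallel iteration'' is one pass of the repeat loop, in which all $T$ updates are computed from the previous iterate $\mathbf{s}^{k-1}_{1:T}$. $\|\cdot\|$ is a norm on the collection of all states. *)

From HB Require Import structures.
From mathcomp Require Import all_boot all_order all_algebra.
From mathcomp Require Import all_classical all_reals all_analysis.
Set Implicit Arguments. Unset Strict Implicit. Unset Printing Implicit Defensive.
Import Order.TTheory GRing.Theory Num.Theory.
Import numFieldNormedType.Exports.
Local Open Scope ring_scope.

(* States: state t lives in the normed vector space V t, for t : 'I_T
   (index t corresponds to s_{t+1} of the paper).  A collection of all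
   states is a dependent function  forall t, V t. *)
Definition states (R : realType) (T : nat) (V : 'I_T -> normedModType R) :=
  forall t : 'I_T, V t.

Definition states_sub (R : realType) (T : nat) (V : 'I_T -> normedModType R)
  (s s' : states V) : states V := fun t => s t - s' t.

Definition states_scale (R : realType) (T : nat) (V : 'I_T -> normedModType R)
  (a : R) (s : states V) : states V := fun t => a *: s t.

Definition states_add (R : realType) (T : nat) (V : 'I_T -> normedModType R)
  (s s' : states V) : states V := fun t => s t + s' t.

Definition is_states_norm (R : realType) (T : nat) (V : 'I_T -> normedModType R)
  (nrm : states V -> R) : Prop :=
  [/\ (forall s, 0 <= nrm s),
      (forall s, nrm s = 0 -> s = (fun t => 0 : V t)),
      (forall s s', nrm (states_add s s') <= nrm s + nrm s') &
      (forall a s, nrm (states_scale a s) = `|a| * nrm s)].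

(* h t u s is h_{t+1}(u, s_{1:t}) ; causality: it only depends on the
   states with index < t. *)
Definition causal (R : realType) (T : nat) (V : 'I_T -> normedModType R)
  (U : Type) (h : forall t : 'I_T, U -> states V -> V t) : Prop :=
  forall (t : 'I_T) (u : U) (s s' : states V),
    (forall j : 'I_T, (j < t)%N -> s j = s' j) -> h t u s = h t u s'.

(* Feedforward (sequential) computation: for t = 1..T in order,
   s_t <- h_t(u, s_{1:t-1}); the entries of the initial buffer sinit are
   all overwritten before being read. *)
Definition feedforward (R : realType) (T : nat) (V : 'I_T -> normedModType R)
  (U : Type) (h : forall t : 'I_T, U -> states V -> V t) (u : U)
  (sinit : states V) : states V :=
  foldl (fun (s : states V) (t : 'I_T) => @dfwith _ (fun j : 'I_T => (V j : Type)) s t (h t u s)) sinit (enum 'I_T).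

Definition jacobi_step (R : realType) (T : nat) (V : 'I_T -> normedModType R)
  (U : Type) (h : forall t : 'I_T, U -> states V -> V t) (u : U)
  (s : states V) : states V := fun t => h t u s.

(* The repeat loop: k is the number of iterations done so far, sprev the
   current iterate s^k; fuel only guarantees termination (the loop always
   stops at k = T when started with fuel T and k = 0). *)
Fixpoint jacobi_loop (R : realType) (T : nat) (V : 'I_T -> normedModType R)
  (U : Type) (h : forall t : 'I_T, U -> states V -> V t) (u : U)
  (nrm : states V -> R) (eps : R) (fuel k : nat) (sprev : states V)
  : nat * states V :=
  let snew := jacobi_step h u sprev in
  match fuel with
  | 0 => (k.+1, snew)
  | fuel'.+1 =>
      if (k.+1 == T) || (nrm (states_sub snew sprev) < eps)
      then (k.+1, snew)
      else jacobi_loop h u nrm eps fuel' k.+1 snew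
  end.

Definition jacobi (R : realType) (T : nat) (V : 'I_T -> normedModType R)
  (U : Type) (h : forall t : 'I_T, U -> states V -> V t) (u : U)
  (nrm : states V -> R) (eps : R) (s0 : states V) : nat * states V :=
  jacobi_loop h u nrm eps T 0 s0.

From HB Require Import structures.
From mathcomp Require Import all_boot all_order all_algebra.
From mathcomp Require Import all_classical all_reals all_analysis.
Import Order.TTheory GRing.Theory Num.Theory.
Local Open Scope ring_scope.

(* The feedforward states s* are a fixed point of the Jacobi map s |-> (h_t(u, s_{1:t-1}))_t.
   By causality, after k Jacobi steps from any initialization the first k states
   agree with those of any such fixed point, so after T steps the iterate is s*.
   With eps = 0 the stopping test ||s^k - s^{k-1}|| < 0 never fires, so the loop
   performs exactly T iterations. *)

Section Feedforward.
Variables (R : realType) (T : nat) (V : 'I_T -> normedModType R) (U : Type).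
Variables (h : forall t : 'I_T, U -> states V -> V t) (u : U).
Hypothesis h_causal : causal h.

Definition feedforward_update (s : states V) (t : 'I_T) : states V :=
  @dfwith _ (fun j : 'I_T => (V j : Type)) s t (h t u s).

Definition solved_below (m : nat) (s : states V) : Prop :=
  forall j : 'I_T, (j < m)%N -> s j = h j u s.

Lemma feedforward_update_below (s : states V) (t j : 'I_T) :
  (j < t)%N -> feedforward_update s t j = s j.
Proof. by move=> jt; apply: dfwith_out; rewrite neq_ltn jt orbT. Qed.

Lemma feedforward_update_at (s : states V) (t : 'I_T) :
  feedforward_update s t t = h t u s.
Proof. exact: dfwith_in. Qed.

Lemma h_feedforward_update (s : states V) (t j : 'I_T) :
  (j <= t)%N -> h j u (feedforward_update s t) = h j u s.
Proof.
move=> jt; apply: h_causal => i ij.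
by apply: feedforward_update_below; apply: leq_trans ij jt.
Qed.

Lemma solved_below_update (s : states V) (t : 'I_T) :
  solved_below t s -> solved_below t.+1 (feedforward_update s t).
Proof.
move=> s_solved j; rewrite ltnS leq_eqVlt => /orP[/eqP/val_inj -> | jt].
  by rewrite feedforward_update_at h_feedforward_update.
by rewrite feedforward_update_below // h_feedforward_update ?(ltnW jt) ?s_solved.
Qed.

Lemma solved_below_foldl (l : seq 'I_T) (m : nat) (s : states V) :
  map val l = iota m (size l) -> solved_below m s ->
  solved_below (m + size l) (foldl feedforward_update s l).
Proof.
elim: l m s => [|t l IHl] m s /=; first by rewrite addn0.
case=> <- l_iota s_solved; rewrite addnS -addSn.
exact/IHl/solved_below_update.
Qed.

Lemma jacobi_step_feedforward (sinit : states V) :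
  jacobi_step h u (feedforward h u sinit) = feedforward h u sinit.
Proof.
apply: functional_extensionality_dep => j; apply/esym.
have := @solved_below_foldl (enum 'I_T) 0 sinit.
by rewrite val_enum_ord size_enum_ord; apply.
Qed.

Lemma iter_jacobi_step_prefix (sstar s : states V) (k : nat) (j : 'I_T) :
  jacobi_step h u sstar = sstar -> (j < k)%N ->
  iter k (jacobi_step h u) s j = sstar j.
Proof.
move=> sstar_fix; elim: k j => [//|k IHk] j jk.
rewrite -sstar_fix iterS /jacobi_step; apply: h_causal => i ij.
by apply: IHk; apply: leq_trans ij jk.
Qed.

Lemma iter_jacobi_step_fixpoint (sstar s : states V) :
  jacobi_step h u sstar = sstar -> iter T (jacobi_step h u) s = sstar.
Proof.
move=> sstar_fix; apply: functional_extensionality_dep => j.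
exact: iter_jacobi_step_prefix.
Qed.

End Feedforward.

Lemma jacobi_loop_full (R : realType) (T : nat) (V : 'I_T -> normedModType R)
  (U : Type) (h : forall t : 'I_T, U -> states V -> V t) (u : U)
  (nrm : states V -> R) (eps : R) (fuel k : nat) (s : states V) :
  (forall s, eps <= nrm s) -> (k < T)%N -> (T <= k + fuel.+1)%N ->
  jacobi_loop h u nrm eps fuel k s = (T, iter (T - k) (jacobi_step h u) s).
Proof.
move=> nrm_ge; elim: fuel k s => [|fuel IHfuel] k s kT Tle /=.
  have Tk : k.+1 = T by apply/eqP; rewrite eqn_leq kT -addn1 Tle.
  by rewrite -[in (T - k)%N]Tk subSnn Tk.
case: eqP => [Tk | /eqP Tk] /=; first by rewrite -[in (T - k)%N]Tk subSnn Tk.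
have kT' : (k.+1 < T)%N by rewrite ltn_neqAle Tk.
by rewrite ltNge nrm_ge /= IHfuel ?addSnnS // -iterSr subnSK.
Qed.

Theorem proposition1 (R : realType) (T : nat) (V : 'I_T -> normedModType R)
  (U : Type) (h : forall t : 'I_T, U -> states V -> V t) (u : U)
  (nrm : states V -> R) (eps : R) (s0 : states V) :
  (1 <= T)%N -> causal h -> is_states_norm nrm -> eps = 0 ->
  ((jacobi h u nrm eps s0).1 <= T)%N /\
  (forall sinit : states V, (jacobi h u nrm eps s0).2 = feedforward h u sinit).
Proof.
move=> T_gt0 h_causal [nrm_ge0 _ _ _] ->.
rewrite /jacobi jacobi_loop_full ?addn1 // subn0.
split=> // sinit.
exact/iter_jacobi_step_fixpoint/jacobi_step_feedforward.
Qed.
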